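(* Every precompact subset $A$ of the Banach space $c_0$ has finite entropy; moreover $\mathbf E(A)=\mathbf E_0(A)=\sup_{x\in A}\|x\|$.
   Context: $c_0$ is the real Banach space of null sequences with the supremum norm. A brick in a Banach space $X$ is a set $K_{\mathcal B,\mathcal E}=\{x\in X:\ |e_n^*(x)|\le\varepsilon_n\ \forall n\}$, where $\mathcal B=(e_n)$ is a normalized Schauder basis with biorthogonal functionals $(e_n^* )$ and $\varepsilon_n\ge0$; its unconditional radius is $r^{\rm unc}(K_{\mathcal B,\mathcal E})=\sup_{\theta_n=\pm1}\|\sum_n\theta_n\varepsilon_ne_n\|$ (norm of a divergent series $=\infty$). The entropy $\mathbf E(A)$ is the infimum of $r^{\rm unc}$ over all bricks containing $A$; the unconditional entropy $\mathbf E_0(A)$ is the same infimum over bricks built on $1$-unconditional bases (i.e. $\|\sum_n\theta_ne_n^*(x)e_n\|\le\|x\|$ for all $x$ and all signs $\theta_n=\pm1$); an empty infimum is $\infty$. A set is precompact if for every $\varepsilon>0$ it contains a finite $\varepsilon$-net. *)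

From mathcomp Require Import all_boot all_order all_algebra.
From mathcomp Require Import all_classical all_reals all_analysis.
Set Implicit Arguments. Unset Strict Implicit. Unset Printing Implicit Defensive.
Import Order.TTheory GRing.Theory Num.Theory.
Local Open Scope classical_set_scope.
Local Open Scope ring_scope.

Section C0.
Variable R : realType.

Definition c0 : set (nat -> R) := [set x : nat -> R | x @ \oo --> 0].

Definition nrm (x : nat -> R) : \bar R :=
  ereal_sup [set (`|x k|)%:E | k in [set: nat]].

Definition psum (a : nat -> R) (e : nat -> nat -> R) (N : nat) : nat -> R :=
  fun k => \sum_(n < N) a n * e n k.

Definition series_to (a : nat -> R) (e : nat -> nat -> R) (x : nat -> R) :=
  forall eps : R, 0 < eps -> exists N : nat, forall M : nat, (N <= M)%N ->
    (nrm (fun k => (psum a e M k - x k)%R) < eps%:E)%E.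

(* || sum_n a_n e_n ||, with the convention that the norm of a series
   not converging in c_0 is +oo (the limit is unique, so the set below is
   empty or a singleton; ereal_inf of the empty set is +oo). *)
Definition series_norm (a : nat -> R) (e : nat -> nat -> R) : \bar R :=
  ereal_inf [set r | exists y, c0 y /\ series_to a e y /\ r = nrm y].

(* Schauder basis of c_0 : every x in c_0 has a unique norm-convergent
   expansion x = sum_n a_n e_n; a_n = e_n^*(x) (biorthogonal functionals). *)
Definition schauder_basis (e : nat -> nat -> R) :=
  (forall n, c0 (e n)) /\
  (forall x, c0 x -> exists! a : nat -> R, series_to a e x).

Definition normalized (e : nat -> nat -> R) := forall n, nrm (e n) = 1%:E.

Definition signs : set (nat -> R) := [set t | forall n, t n = 1 \/ t n = -1].

Definition one_unconditional (e : nat -> nat -> R) :=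
  forall x a, c0 x -> series_to a e x ->
  forall t, signs t -> (series_norm (fun n => (t n * a n)%R) e <= nrm x)%E.

Definition brick (e : nat -> nat -> R) (eps : nat -> R) : set (nat -> R) :=
  [set x | c0 x /\ exists a, series_to a e x /\ forall n, `|a n| <= eps n].

Definition r_unc (e : nat -> nat -> R) (eps : nat -> R) : \bar R :=
  ereal_sup [set series_norm (fun n => t n * eps n) e | t in signs].

Definition entropy (A : set (nat -> R)) : \bar R :=
  ereal_inf [set r | exists e eps, schauder_basis e /\ normalized e /\
    (forall n, 0 <= eps n) /\ A `<=` brick e eps /\ r = r_unc e eps].

Definition entropy0 (A : set (nat -> R)) : \bar R :=
  ereal_inf [set r | exists e eps, schauder_basis e /\ normalized e /\
    one_unconditional e /\
    (forall n, 0 <= eps n) /\ A `<=` brick e eps /\ r = r_unc e eps].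

Definition precompact_c0 (A : set (nat -> R)) :=
  forall eps : R, 0 < eps -> exists s : seq (nat -> R),
    (forall y, y \in s -> A y) /\
    (forall x, A x -> exists2 y, y \in s & (nrm (fun k => (x k - y k)%R) < eps%:E)%E).

(* sup_{x in A} ||x||, with sup over the empty set = 0 (norms are >= 0) *)
Definition sup_norm (A : set (nat -> R)) : \bar R :=
  ereal_sup (0%E |` [set nrm x | x in A]).

End C0.

From mathcomp Require Import all_boot all_order all_algebra.
From mathcomp Require Import all_classical all_reals all_analysis.
From mathcomp Require Import lra.
Set Implicit Arguments. Unset Strict Implicit. Unset Printing Implicit Defensive.
Import Order.TTheory GRing.Theory Num.Theory numFieldNormedType.Exports.
Local Open Scope classical_set_scope.
Local Open Scope ring_scope.

(* Lower bound: if x lies in a brick K_{B,E}, choose theta_n as the sign of the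
   k-th coordinate of e_n; then the k-th coordinate of sum_n theta_n eps_n e_n
   dominates |x_k|, so sup_{x in A} ||x|| <= r_unc of every brick containing A.
   Upper bound: on the canonical basis of c_0, which is 1-unconditional, take
   eps_k = sup_{x in A} |x_k|.  Precompactness makes (eps_k) a null sequence,
   and then r_unc = ||(eps_k)|| <= sup_{x in A} ||x||. *)

Section C0Entropy.
Variable R : realType.
Implicit Types (a t eps x y : nat -> R) (e : nat -> nat -> R) (A : set (nat -> R)).

Lemma c0P x : c0 x <-> forall d : R, 0 < d -> exists N, forall k, (N <= k)%N -> `|x k| < d.
Proof.
rewrite /c0 /=; split.
  move=> /cvgrPdist_lt H d d0; have [N _ HN] := H d d0.
  by exists N => k Hk; have := HN k Hk; rewrite sub0r normrN.
move=> H; apply/cvgrPdist_lt => d d0; have [N HN] := H d d0.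
by exists N => // k Hk /=; rewrite sub0r normrN; apply: HN.
Qed.

Lemma nrm_ge x k : ((`|x k|)%:E <= nrm x)%E.
Proof. by apply: ereal_sup_ubound; exists k. Qed.

Lemma nrm_ge0 x : (0 <= nrm x)%E.
Proof. exact: le_trans (nrm_ge x 0). Qed.

Lemma nrm_le x (b : \bar R) : (forall k, ((`|x k|)%:E <= b)%E) -> (nrm x <= b)%E.
Proof. by move=> H; apply: ge_ereal_sup => _ [k _ <-]. Qed.

Lemma nrm_lt x (d : R) : (nrm x < d%:E)%E -> forall k, `|x k| < d.
Proof. by move=> H k; rewrite -lte_fin; apply: le_lt_trans (nrm_ge x k) H. Qed.

Lemma c0_nrm_fin x : c0 x -> (nrm x < +oo)%E.
Proof.
move=> /c0P /(_ 1 ltr01) [N HN].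
apply: (@le_lt_trans _ _ ((1 + \sum_(k < N) `|x k|)%:E)); last exact: ltry.
apply: nrm_le => k; rewrite lee_fin.
have sum_ge0 : 0 <= \sum_(j < N) `|x j| by apply: sumr_ge0.
case: (leqP N k) => Hk; first by apply: le_trans (ltW (HN k Hk)) _; rewrite lerDl.
apply: le_trans (_ : \sum_(j < N) `|x j| <= _); last by rewrite lerDr.
by rewrite (bigD1 (Ordinal Hk)) //= lerDl; apply: sumr_ge0.
Qed.

Lemma normr_sign t k (y : R) : signs t -> `|t k * y| = `|y|.
Proof. by move=> /(_ k) [] ->; rewrite ?mul1r // mulN1r normrN. Qed.

Lemma c0_sign t x : signs t -> c0 x -> c0 (fun k => t k * x k).
Proof.
move=> st /c0P H; apply/c0P => d d0; have [N HN] := H d d0.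
by exists N => k Hk; rewrite normr_sign //; apply: HN.
Qed.

Lemma nrm_sign t x : signs t -> nrm (fun k => t k * x k) = nrm x.
Proof.
move=> st; apply/eqP; rewrite eq_le; apply/andP; split; apply: nrm_le => k.
  by rewrite normr_sign //; apply: nrm_ge.
by rewrite -(normr_sign k (x k) st); apply: (nrm_ge (fun k => t k * x k)).
Qed.

Lemma series_norm_ge0 a e : (0 <= series_norm a e)%E.
Proof. by apply: le_ereal_inf_tmp => _ [y [_ [_ ->]]]; apply: nrm_ge0. Qed.

Lemma series_to_cvg a e y k : series_to a e y -> (fun M => psum a e M k) @ \oo --> y k.
Proof.
move=> sy; apply/cvgrPdist_lt => d d0; have [N HN] := sy d d0.
exists N => // M /HN /nrm_lt /(_ k).
by rewrite distrC.
Qed.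

Lemma psum_norm_le_sign a e eps k M :
  (forall n, `|a n| <= eps n) ->
  `|psum a e M k| <= psum (fun n => (if 0 <= e n k then 1 else -1) * eps n) e M k.
Proof.
move=> ha; rewrite /psum; apply: le_trans (ler_norm_sum _ _ _) _.
apply: ler_sum => n _; rewrite normrM mulrAC [X in _ <= X]mulrC.
have -> : (if 0 <= e n k then 1 else -1) * e n k = `|e n k|.
  case: ifP => h; first by rewrite mul1r ger0_norm.
  by rewrite mulN1r ltr0_norm // ltNge h.
exact: ler_wpM2r.
Qed.

Lemma brick_coord_le_r_unc e eps x k : brick e eps x -> ((`|x k|)%:E <= r_unc e eps)%E.
Proof.
case=> _ [a [sx ha]].
pose t n : R := if 0 <= e n k then 1 else -1.
have st : signs t by move=> n; rewrite /t; case: ifP; [left|right].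
apply: (@le_trans _ _ (series_norm (fun n => t n * eps n) e)); last first.
  by apply: ereal_sup_ubound; exists t.
apply: le_ereal_inf_tmp => _ [y [_ [sy ->]]].
apply: le_trans (nrm_ge y k); rewrite lee_fin.
apply: le_trans _ (ler_norm (y k)).
apply: (ler_cvg_to (cvg_norm (series_to_cvg (k := k) sx)) (series_to_cvg (k := k) sy)).
by near=> M; apply: psum_norm_le_sign.
Unshelve. all: by end_near.
Qed.

Lemma sup_norm_le_r_unc e eps A : A `<=` brick e eps -> (sup_norm A <= r_unc e eps)%E.
Proof.
move=> HA; apply: ge_ereal_sup => _ [->|[x Ax <-]].
  apply: le_trans (series_norm_ge0 (fun n => 1 * eps n) e) _.
  by apply: ereal_sup_ubound; exists (fun _ => 1) => // n; left.
by apply: nrm_le => k; apply: brick_coord_le_r_unc; apply: HA.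
Qed.

Definition cbasis : nat -> nat -> R := fun n k => (n == k)%:R.

Lemma psum_cbasis a M k : psum a cbasis M k = if (k < M)%N then a k else 0.
Proof.
rewrite /psum /cbasis; elim: M => [|M IH]; first by rewrite big_ord0.
rewrite big_ord_recr /= IH [(k < M.+1)%N]ltnS [(k <= M)%N]leq_eqVlt.
by case: (eqVneq k M) => [->|kM] /=; rewrite ?ltnn ?mulr1 ?add0r ?mulr0 ?addr0.
Qed.

Lemma series_to_cbasis x : c0 x -> series_to x cbasis x.
Proof.
move=> /c0P Hx d d0; have [N HN] := Hx (d / 2) (divr_gt0 d0 (ltr0Sn _ 1)).
exists N => M HM; apply: (@le_lt_trans _ _ (d / 2)%:E); last by rewrite lte_fin; lra.
apply: nrm_le => k; rewrite psum_cbasis lee_fin.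
case: ifP => Hk; first by rewrite subrr normr0; lra.
by rewrite sub0r normrN ltW // HN // (leq_trans HM) // leqNgt Hk.
Qed.

Lemma series_to_cbasis_eq a x : series_to a cbasis x -> a = x.
Proof.
move=> H; apply/funext => k; apply/eqP; rewrite -subr_eq0 -normr_le0.
apply/ler_addgt0Pr => d d0; rewrite add0r.
have [N HN] := H d d0.
have := nrm_lt (HN (maxn N k.+1) (leq_maxl _ _)) k.
by rewrite psum_cbasis leq_max ltnSn orbT => /ltW.
Qed.

Lemma series_norm_cbasis a : c0 a -> series_norm a cbasis = nrm a.
Proof.
move=> ca; apply/eqP; rewrite eq_le; apply/andP; split.
  by apply: ereal_inf_lbound; exists a; split => //; split => //; apply: series_to_cbasis.
by apply: le_ereal_inf_tmp => _ [y [_ [/series_to_cbasis_eq -> ->]]].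
Qed.

Lemma cbasis_schauder : schauder_basis cbasis.
Proof.
split=> [n|x cx].
  apply/c0P => d d0; exists n.+1 => k Hk.
  by rewrite /cbasis ltn_eqF // normr0.
by exists x; split=> [|a /series_to_cbasis_eq //]; apply: series_to_cbasis.
Qed.

Lemma cbasis_normalized : normalized cbasis.
Proof.
move=> n; apply/eqP; rewrite eq_le; apply/andP; split.
  by apply: nrm_le => k; rewrite /cbasis lee_fin; case: (n == k); rewrite ?normr1 ?normr0.
by apply: le_trans (nrm_ge _ n); rewrite /cbasis eqxx normr1.
Qed.

Lemma cbasis_one_unconditional : one_unconditional cbasis.
Proof.
move=> x a cx /series_to_cbasis_eq -> t st.
by rewrite series_norm_cbasis ?nrm_sign //; apply: c0_sign.
Qed.

Lemma r_unc_cbasis eps : c0 eps -> r_unc cbasis eps = nrm eps.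
Proof.
move=> ce; apply/eqP; rewrite eq_le; apply/andP; split.
  apply: ge_ereal_sup => _ [t st <-].
  by rewrite series_norm_cbasis ?nrm_sign //; apply: c0_sign.
apply: ereal_sup_ubound; exists (fun _ => 1); first by move=> n; left.
by rewrite series_norm_cbasis; under eq_fun do rewrite mul1r.
Qed.

Definition coord_esup A k : \bar R := ereal_sup (0%E |` [set (`|x k|)%:E | x in A]).

(* [fine] sends an infinite supremum to [0]; [coord_esup A k] is finite when
   [A] is precompact. *)
Definition coord_sup A k : R := fine (coord_esup A k).

Lemma coord_esup_ge0 A k : (0 <= coord_esup A k)%E.
Proof. by apply: ereal_sup_ubound; left. Qed.

Lemma coord_esup_ub A x k : A x -> ((`|x k|)%:E <= coord_esup A k)%E.
Proof. by move=> Ax; apply: ereal_sup_ubound; right; exists x. Qed.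

Lemma coord_esup_le_sup_norm A k : (coord_esup A k <= sup_norm A)%E.
Proof.
apply: ge_ereal_sup => _ [->|[x Ax <-]]; first by apply: ereal_sup_ubound; left.
by apply: le_trans (nrm_ge x k) _; apply: ereal_sup_ubound; right; exists x.
Qed.

Lemma coord_esup_le_net A (s : seq (nat -> R)) (d b : R) k :
  0 < d -> 0 <= b -> (forall y, y \in s -> `|y k| <= b) ->
  (forall x, A x -> exists2 y, y \in s & (nrm (fun j => (x j - y j)%R) < d%:E)%E) ->
  (coord_esup A k <= (d + b)%:E)%E.
Proof.
move=> d0 b0 sb net; apply: ge_ereal_sup => _ [->|[x Ax <-]]; rewrite lee_fin.
  exact: addr_ge0 (ltW d0) b0.
have [y ys /nrm_lt /(_ k) xy] := net x Ax.
have := sb y ys; have : `|x k| <= `|x k - y k| + `|y k|.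
  by rewrite -[X in `|X| <= _](subrK (y k)); apply: ler_normD.
lra.
Qed.

Lemma normr_le_sum_mem (s : seq (nat -> R)) y k : y \in s -> `|y k| <= \sum_(z <- s) `|z k|.
Proof.
elim: s => [//|z s IH]; rewrite in_cons big_cons => /orP [/eqP ->|ys].
  by rewrite lerDl; apply: sumr_ge0.
by apply: le_trans (IH ys) _; rewrite lerDr.
Qed.

Lemma c0_seq_uniform (s : seq (nat -> R)) : (forall y, y \in s -> c0 y) ->
  forall d : R, 0 < d -> exists N, forall y, y \in s -> forall k, (N <= k)%N -> `|y k| < d.
Proof.
elim: s => [|z s IH] H d d0; first by exists 0%N.
have [N1 H1] := IH (fun y ys => H y (mem_behead (s := z :: s) ys)) d d0.
have [N2 H2] := (c0P _).1 (H z (mem_head _ _)) d d0.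
exists (maxn N1 N2) => y; rewrite in_cons => /orP [/eqP ->|ys] k Hk.
  by apply: H2; apply: leq_trans Hk; apply: leq_maxr.
by apply: H1 => //; apply: leq_trans Hk; apply: leq_maxl.
Qed.

Section Precompact.
Variable A : set (nat -> R).
Hypothesis pcA : precompact_c0 A.

Lemma coord_esup_fin k : coord_esup A k \is a fin_num.
Proof.
have [s [_ net]] := pcA ltr01.
rewrite ge0_fin_numE ?coord_esup_ge0 //.
apply: le_lt_trans (ltry (1 + \sum_(z <- s) `|z k|)).
apply: coord_esup_le_net net => // [|y /normr_le_sum_mem //].
exact: sumr_ge0.
Qed.

Lemma coord_sup_ub x k : A x -> `|x k| <= coord_sup A k.
Proof. by move=> Ax; rewrite -lee_fin fineK ?coord_esup_fin ?coord_esup_ub. Qed.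

Lemma nrm_coord_sup_le : (nrm (coord_sup A) <= sup_norm A)%E.
Proof.
apply: nrm_le => k; rewrite ger0_norm ?fine_ge0 ?coord_esup_ge0 //.
by rewrite fineK ?coord_esup_fin ?coord_esup_le_sup_norm.
Qed.

Hypothesis Ac0 : A `<=` @c0 R.

(* A (d/4)-net consists of finitely many null sequences, all below d/4 beyond
   a common index. *)
Lemma c0_coord_sup : c0 (coord_sup A).
Proof.
apply/c0P => d d0; have d4 : 0 < d / 4 by apply: divr_gt0.
have [s [sA net]] := pcA d4.
have [N HN] := c0_seq_uniform (fun y ys => Ac0 (sA y ys)) d4.
exists N => k Hk.
have : (coord_esup A k <= (d / 4 + d / 4)%:E)%E.
  by apply: coord_esup_le_net net => // [|y ys]; [lra | exact/ltW/HN].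
rewrite ger0_norm ?fine_ge0 ?coord_esup_ge0 // -lte_fin fineK ?coord_esup_fin //.
by move/le_lt_trans; apply; rewrite lte_fin; lra.
Qed.

Lemma entropy0_le_nrm_coord_sup : (entropy0 A <= nrm (coord_sup A))%E.
Proof.
rewrite -r_unc_cbasis; last exact: c0_coord_sup.
apply: ereal_inf_lbound; exists cbasis, (coord_sup A).
split; first exact: cbasis_schauder.
split; first exact: cbasis_normalized.
split; first exact: cbasis_one_unconditional.
split=> [k|]; first by rewrite fine_ge0 ?coord_esup_ge0.
split=> // x Ax; split; first exact: Ac0.
by exists x; split=> [|k]; [apply/series_to_cbasis/Ac0 | apply: coord_sup_ub].
Qed.

End Precompact.

Lemma entropy_le_entropy0 A : (entropy A <= entropy0 A)%E.
Proof.
by apply: le_ereal_inf => r [e [eps [sb [nb [_ rest]]]]]; exists e, eps.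
Qed.

Lemma sup_norm_le_entropy A : (sup_norm A <= entropy A)%E.
Proof.
by apply: le_ereal_inf_tmp => _ [e [eps [_ [_ [_ [HA ->]]]]]]; apply: sup_norm_le_r_unc.
Qed.

End C0Entropy.

Theorem proposition4p9 (R : realType) (A : set (nat -> R)) :
  A `<=` @c0 R -> precompact_c0 A ->
  (entropy A < +oo)%E /\ entropy A = sup_norm A /\ entropy0 A = sup_norm A.
Proof.
move=> Ac0 pcA.
have E0_le := entropy0_le_nrm_coord_sup pcA Ac0.
have le_S := nrm_coord_sup_le pcA.
have S_le := sup_norm_le_entropy A.
have E_le := entropy_le_entropy0 A.
have E0E : entropy0 A = sup_norm A.
  by apply: le_anti; apply/andP; split; [exact: le_trans E0_le le_S | exact: le_trans S_le E_le].
have EE : entropy A = sup_norm A.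
  by apply: le_anti; apply/andP; split; [rewrite -E0E; exact: E_le | exact: S_le].
split=> //; apply: le_lt_trans (c0_nrm_fin (c0_coord_sup pcA Ac0)).
exact: le_trans E_le E0_le.
Qed.
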